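(* Let $3\leq q<p$ be primes with $q-1\mid p-1$. Let $f:\mathbb{Z}_p\to\mathbb{Z}_q$ satisfy $f(0)=0$ and be such that the restriction of $f$ to $\mathbb{Z}_p^\times$ is a surjective group homomorphism $\mathbb{Z}_p^\times\to\mathbb{Z}_q^\times$ (of multiplicative groups). Let $A$ be the $p\times p$ matrix over the field $\mathbb{Z}_q$, with rows and columns indexed by $\mathbb{Z}_p$, given by $A_{i+j,i}=f(j)$ for $i,j\in\mathbb{Z}_p$. Then $A$ has rank $p-1$. *)

From mathcomp Require Import all_boot all_order all_algebra.
Set Implicit Arguments. Unset Strict Implicit. Unset Printing Implicit Defensive.
Import GRing.Theory.
Local Open Scope ring_scope.

Definition units_surj_hom (p q : nat) (f : 'F_p -> 'F_q) : Prop :=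
  [/\ (forall x : 'F_p, x != 0 -> f x != 0),
      (forall x y : 'F_p, x != 0 -> y != 0 -> f (x * y) = f x * f y)
    & (forall z : 'F_q, z != 0 -> exists2 x : 'F_p, x != 0 & f x = z)].

(* The p x p matrix over Z_q with rows/columns indexed by Z_p (identified
   with 'I_p via k |-> k mod p), with A_{i+j,i} = f(j), i.e.
   A_{r,c} = f(r - c). *)
Definition circA (p q : nat) (f : 'F_p -> 'F_q) : 'M['F_q]_p :=
  \matrix_(r < p, c < p) f ((r%:R : 'F_p) - (c%:R : 'F_p)).

From mathcomp Require Import all_boot all_order all_algebra.
Set Implicit Arguments. Unset Strict Implicit. Unset Printing Implicit Defensive.
Local Open Scope ring_scope.
Import GRing.Theory.

(* [f] is a nontrivial multiplicative character [chi] of [F_p] with values in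
   [F_q] ([chi g = -1 <> 1] since [q >= 3]).  Hence every column of [A] sums
   to [sum_x chi x = 0], so [1 A = 0] and [rank A < p].  Conversely, with
   [B_{r,c} = chi (c - r)^-1] the correlation identity
   [sum_k chi (a - k) / chi (b - k) = p [a = b] - 1] gives [A B = p I - J],
   with [J] the all-ones matrix; as [p <> 0] in [F_q], [p <= rank A + 1]. *)

Lemma morph_mul_of_nonzero (F K : fieldType) (f : F -> K) :
    f 0 = 0 -> (forall x y, x != 0 -> y != 0 -> f (x * y) = f x * f y) ->
  {morph f : x y / x * y}.
Proof.
move=> f0 fM x y.
have [->|x0] := eqVneq x 0; first by rewrite mul0r f0 mul0r.
have [->|y0] := eqVneq y 0; first by rewrite mulr0 f0 mulr0.
exact: fM.
Qed.

Section MultiplicativeCharacter.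
Variables (F : finFieldType) (K : fieldType) (chi : F -> K).
Hypotheses (chi0 : chi 0 = 0) (chiM : {morph chi : x y / x * y}).
Hypothesis chi_neq0 : forall x, x != 0 -> chi x != 0.

Lemma chi1 : chi 1 = 1.
Proof.
have chi1_neq0 : chi 1 != 0 by apply: chi_neq0; rewrite oner_eq0.
by apply: (mulfI chi1_neq0); rewrite -chiM !mulr1.
Qed.

Lemma chiV x : chi x^-1 = (chi x)^-1.
Proof.
have [->|x0] := eqVneq x 0; first by rewrite invr0 chi0 invr0.
have chix_neq0 := chi_neq0 x0.
by apply: (mulfI chix_neq0); rewrite -chiM !mulfV // chi1.
Qed.

Variable g : F.
Hypotheses (g_neq0 : g != 0) (chig_neq1 : chi g != 1).

Lemma sum_chi_eq0 : \sum_x chi x = 0.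
Proof.
have sum_chiM : \sum_x chi x = chi g * \sum_x chi x.
  rewrite {1}(reindex_inj (mulfI g_neq0)) mulr_sumr.
  by apply: eq_bigr => x _; rewrite chiM.
have : (1 - chi g) * \sum_x chi x = 0 by rewrite mulrBl mul1r -sum_chiM subrr.
by move/eqP; rewrite mulf_eq0 subr_eq0 eq_sym (negbTE chig_neq1) => /eqP.
Qed.

Lemma sum_chi_correlation a b :
  \sum_k chi (a - k) * (chi (b - k))^-1 = if a == b then #|F|%:R - 1 else -1.
Proof.
rewrite (reindex_inj (inv_inj (subKr b))) /=.
under eq_bigr => k _ do rewrite subKr opprB addrA addrAC.
rewrite -subr_eq0; set d := a - b.
rewrite (bigD1 0) //= chi0 invr0 mulr0 add0r.
have [->|d_neq0] := eqVneq d 0.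
  under eq_bigr => k k_neq0 do rewrite add0r mulfV ?chi_neq0 //.
  have card_gt0 : (0 < #|F|)%N by apply/card_gt0P; exists 0.
  by rewrite sumr_const cardC1 -{2}(prednK card_gt0) mulrSr addrK.
have chi_ratio k : k != 0 -> chi (d + k) * (chi k)^-1 = chi (d * k^-1 + 1).
  by move=> k_neq0; rewrite -chiV -chiM mulrDl mulfV.
have sum_chi_shift : \sum_k chi (d * k^-1 + 1) = 0.
  have dV_inj : injective (fun k => d * k^-1).
    exact: inj_comp (mulfI d_neq0) (inv_inj (@invrK F)).
  rewrite -[RHS]sum_chi_eq0 [RHS](reindex_inj (addIr 1)).
  by rewrite [RHS](reindex_inj dV_inj).
move: sum_chi_shift; rewrite (bigD1 0) //= invr0 mulr0 add0r chi1 => /eqP.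
rewrite addrC addr_eq0 => /eqP <-.
by apply: eq_bigr => k k_neq0; rewrite chi_ratio.
Qed.
End MultiplicativeCharacter.

Section RankBounds.
Variable K : fieldType.

Lemma mxrank_const_mx m n (a : K) : (\rank (const_mx a : 'M_(m, n)) <= 1)%N.
Proof.
have -> : const_mx a = (const_mx a : 'M_(m, 1)) *m (const_mx 1 : 'M_(1, n)).
  by apply/matrixP => i j; rewrite !mxE big_ord1 !mxE mulr1.
exact: leq_trans (mxrankM_maxr _ _) (rank_leq_row _).
Qed.

Lemma mxrank_lt_of_mulmx_eq0 n (A : 'M[K]_n) (u : 'rV_n) :
  u != 0 -> u *m A = 0 -> (\rank A < n)%N.
Proof.
move=> u_neq0 uA0; rewrite ltn_neqAle rank_leq_row andbT.
by apply: contra u_neq0 => free_A; rewrite -(mulmx_free_eq0 _ free_A) uA0.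
Qed.

Lemma mxrank_ge_of_mulmx_eq_scalar_sub_const n (A B : 'M[K]_n) (a : K) :
  a != 0 -> A *m B = a%:M - const_mx 1 -> (n <= \rank A + 1)%N.
Proof.
move=> a_neq0 AB.
have : (\rank (a%:M : 'M[K]_n)
         <= \rank (A *m B) + \rank (const_mx 1%R : 'M[K]_n))%N.
  by rewrite -[a%:M](subrK (const_mx 1)) -AB; exact: mxrank_add.
rewrite -scalemx1 mxrank_scale_nz // mxrank1 => /leq_trans; apply.
exact: leq_add (mxrankM_maxl _ _) (mxrank_const_mx _ _ _).
Qed.
End RankBounds.

Section PrimeFieldIndex.
Variables (p : nat) (p_pr : prime p).

Lemma sum_ord_Fp (V : nmodType) (F : 'F_p -> V) :
  \sum_(r < p) F r%:R = \sum_x F x.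
Proof.
have cast_bij : bijective (cast_ord (Fp_cast p_pr)).
  exists (cast_ord (esym (Fp_cast p_pr))) => x; first exact: cast_ordK.
  exact: cast_ordKV.
rewrite (reindex _ (onW_bij _ cast_bij)) /=.
by apply: eq_bigr => x _; rewrite natr_Zp.
Qed.

Lemma eq_natr_Fp (r s : 'I_p) : ((r%:R : 'F_p) == s%:R) = (r == s).
Proof.
apply/eqP/eqP => [rs|-> //]; apply: val_inj.
by have := congr1 (@nat_of_ord _) rs; rewrite !val_Fp_nat // !modn_small.
Qed.

End PrimeFieldIndex.

Section CharacterMatrix.
Variables (p q : nat) (p_pr : prime p) (f : 'F_p -> 'F_q).
Hypotheses (f0 : f 0 = 0) (fM : {morph f : x y / x * y}).
Hypothesis f_neq0 : forall x, x != 0 -> f x != 0.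
Variable g : 'F_p.
Hypotheses (g_neq0 : g != 0) (fg_neq1 : f g != 1).

Lemma mulmx_const_circA : (const_mx 1 : 'rV_p) *m circA f = 0.
Proof.
apply/matrixP => i c; rewrite !mxE.
under eq_bigr => r _ do rewrite !mxE mul1r.
rewrite (sum_ord_Fp p_pr (fun x => f (x - c%:R))).
rewrite -[RHS](sum_chi_eq0 fM g_neq0 fg_neq1).
by rewrite [RHS](reindex_inj (addIr (- c%:R))).
Qed.

Lemma circA_mul_correlation :
  circA f *m circA (fun x => (f (- x))^-1) = p%:R%:M - const_mx 1.
Proof.
apply/matrixP => r s; rewrite !mxE.
under eq_bigr => k _ do rewrite !mxE opprB.
rewrite (sum_ord_Fp p_pr (fun x => f (r%:R - x) * (f (s%:R - x))^-1)).
rewrite (sum_chi_correlation f0 fM f_neq0 g_neq0 fg_neq1).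
rewrite card_Fp // eq_natr_Fp //.
by case: (r == s); rewrite ?mulr1n ?mulr0n ?sub0r.
Qed.

End CharacterMatrix.

Lemma Fp_opp1_neq1 q : prime q -> (2 < q)%N -> (-1 : 'F_q) != 1.
Proof.
move=> q_pr q_gt2; rewrite eq_sym -subr_eq0 opprK.
by rewrite -(natrD _ 1 1) -(dvdn_pcharf (pchar_Fp q_pr)) gtnNdvd.
Qed.

Theorem lemma4p7 (p q : nat) (f : 'F_p -> 'F_q) :
  prime p -> prime q -> (3 <= q)%N -> (q < p)%N -> (q.-1 %| p.-1)%N ->
  f 0 = 0 -> units_surj_hom f ->
  \rank (circA f) = p.-1.
Proof.
(* [q.-1 %| p.-1] is only needed for such an [f] to exist. *)
move=> p_pr q_pr q_ge3 q_lt_p _ f0 [f_neq0 fM fsurj].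
have {}fM := morph_mul_of_nonzero f0 fM.
have [g g_neq0 fg] : exists2 g : 'F_p, g != 0 & f g = -1.
  by apply: fsurj; rewrite oppr_eq0 oner_eq0.
have fg_neq1 : f g != 1 by rewrite fg Fp_opp1_neq1.
have p_neq0 : (p%:R : 'F_q) != 0.
  by rewrite -(dvdn_pcharf (pchar_Fp q_pr)) dvdn_prime2 // ltn_eqF.
have rank_lt : (\rank (circA f) < p)%N.
  apply: (mxrank_lt_of_mulmx_eq0 _ (mulmx_const_circA p_pr fM g_neq0 fg_neq1)).
  apply/eqP => /matrixP/(_ 0 (Ordinal (prime_gt0 p_pr)))/eqP.
  by rewrite !mxE oner_eq0.
have rank_ge := mxrank_ge_of_mulmx_eq_scalar_sub_const p_neq0
  (circA_mul_correlation p_pr f0 fM f_neq0 g_neq0 fg_neq1).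
by apply/eqP; rewrite -eqSS prednK ?prime_gt0 // eqn_leq rank_lt -addn1 rank_ge.
Qed.
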